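(* Let $1\le D\le K-1$, let $\mathbf{L}$ be the $(K,D)$ AIR matrix, let $x_0,\dots,x_{K-1}\in\mathbb{F}_2$ and $c_k=\sum_{j=0}^{K-1}\mathbf{L}(j,k)x_j$ for $k\in[0:K-D-1]$. For each $k\in[0:K-1]$ consider receiver $R_k$, which wants $x_k$ and knows the side-information $\{x_{k+1},x_{k+2},\dots,x_{k+D}\}$ (subscripts modulo $K$). Then $R_k$ can decode $x_k$ as follows; in each case the displayed identity holds and every message symbol occurring in the $\nu$-terms belongs to $R_k$'s side-information. (i) If $k\in D_i$ for some $i\in[0:\lceil l/2\rceil]$: $x_k=c_k+c_{k+\mu_k}+\nu_k+\nu_{k+\mu_k}$, where $\nu_k=\sum_{z=1}^{i}\sum_{j=1}^{\beta_{2z-1}}x_{k+D-\lambda_{2z-2}+j\lambda_{2z-1}}$ and $\nu_{k+\mu_k}=x_{k+\mu_k}+\sum_{z=1}^{i}\sum_{j=1}^{\beta_{2z-1}}x_{k+\mu_k+D-\lambda_{2z-2}+j\lambda_{2z-1}}$. (ii) If $k\in E_i$ for some $i\in[0:\lceil l/2\rceil-1]$: $x_k=c_k+c_{k+\mu_k}+\sum_{\tau=1}^{p_k}c_{k+t_{k,\tau}}+\nu_k+\nu_{k+\mu_k}+\sum_{\tau=1}^{p_k}\nu_{k+t_{k,\tau}}$, where $\nu_k$ is as in (i), $\nu_{k+t_{k,\tau}}=x_{k+t_{k,\tau}}+\sum_{z=1}^{i}\sum_{j=1}^{\beta_{2z-1}}x_{k+t_{k,\tau}+D-\lambda_{2z-2}+j\lambda_{2z-1}}$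 for $\tau\in[1:p_k]$, and $\nu_{k+\mu_k}=x_{k+\mu_k}+\sum_{z=1}^{i}\sum_{j=1}^{\beta_{2z-1}}x_{k+\mu_k+D-\lambda_{2z-2}+j\lambda_{2z-1}}+\sum_{j=1}^{c}x_{k+\mu_k+D-\lambda_{2i}+j\lambda_{2i+1}}$, with $c\ge0$ the integer such that $k-(K-D-\lambda_{2i-1})=(\beta_{2i}-1)\lambda_{2i}+c\lambda_{2i+1}+d$, $0\le d<\lambda_{2i+1}$. (iii) If $k\in[K-D-\lambda_l:K-D-1]$: $x_k=c_k+\nu_k$, where $\nu_k=\sum_{z=1}^{\lceil l/2\rceil}\sum_{j=1}^{\beta_{2z-1}}x_{k+D-\lambda_{2z-2}+j\lambda_{2z-1}}$ if $l$ is odd, and $\nu_k=x_{k+D}+\sum_{z=1}^{\lceil l/2\rceil}\sum_{j=1}^{\beta_{2z-1}}x_{k+D-\lambda_{2z-2}+j\lambda_{2z-1}}$ if $l$ is even. (iv) If $k\in[K-D:K-1]$ and $k'=k\bmod(K-D)$: $x_k$ occurs in $c_{k'}$ and $x_k=c_{k'}+\nu_{k'}$, where $\nu_{k'}$ is the sum of all message symbols occurring in $c_{k'}$ other than $x_k$.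
   Context: Notation: $[a:b]=\{a,\dots,b\}$ (empty if $b<a$). Let $K,D$ be integers with $1\le D\le K-1$. Define $\lambda_{-1}=K-D$, $\lambda_0=D$ and recursively, by Euclidean division, $\lambda_{i-1}=\beta_i\lambda_i+\lambda_{i+1}$ with $0\le\lambda_{i+1}<\lambda_i$, for $i=0,1,2,\dots$, stopping at the index $l\ge0$ with $\lambda_{l+1}=0$; $\beta_0\ge0$ may be $0$, $\beta_i\ge1$ for $i\ge1$. Set $\lambda_j=0$, $\beta_j=0$ for $j>l$. For $n\mid m$, $\mathbf{I}_{m\times n}$ is $m/n$ copies of the $n\times n$ identity stacked vertically and $\mathbf{I}_{n\times m}$ its transpose. The $(K,D)$ AIR matrix $\mathbf{L}$ is the $K\times(K-D)$ $0/1$ matrix (rows $[0:K-1]$, columns $[0:K-D-1]$) that is zero except in the blocks: the $(K-D)\times(K-D)$ identity in rows and columns $[0:K-D-1]$; for $0\le 2i\le l$, the even submatrix $\mathbf{I}_{\lambda_{2i}\times\beta_{2i}\lambda_{2i}}$ in rows $[K-\lambda_{2i}:K-1]$, columns $[K-D-\lambda_{2i-1}:K-D-\lambda_{2i+1}-1]$ (absent if $i=0,\beta_0=0$); for $1\le 2i+1\le l$, the odd submatrix $\mathbf{I}_{\beta_{2i+1}\lambda_{2i+1}\times\lambda_{2i+1}}$ in rows $[K-\lambda_{2i}:K-\lambda_{2i+2}-1]$, columns $[K-D-\lambda_{2i+1}:K-D-1]$. For $0\le i\le\lceil l/2\rceil$ set $D_i=[K-D-\lambda_{2i-1}:K-D-\lambda_{2i-1}+(\beta_{2i}-1)\lambda_{2i}-1]$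 and $E_i=[K-D-\lambda_{2i-1}+(\beta_{2i}-1)\lambda_{2i}:K-D-\lambda_{2i+1}-1]$. Distances: for $k\in[0:K-D-1]$, $d_{down}(k)=k'-k$ where $k'$ is the largest row index $>k$ with $\mathbf{L}(k',k)=1$. For $k\in[0:K-D-\lambda_l-1]$: $\mu_k=k''-k$ where $k''$ is the smallest column index $>k$ with $\mathbf{L}(k+d_{down}(k),k'')=1$; $p_k$ is the number of entries equal to $1$ in column $k+\mu_k$ strictly below row $k+d_{down}(k)$, and $t_{k,1}<\dots<t_{k,p_k}$ are the row distances of these entries from row $k+d_{down}(k)$. All arithmetic is in $\mathbb{F}_2$. *)

(* F_2 is modelled by bool, with addition = addb (xor),
   written  a (+) b , and multiplication = andb. *)
From mathcomp Require Import all_boot.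
Set Implicit Arguments. Unset Strict Implicit. Unset Printing Implicit Defensive.

(* lam_pair K D j = (lambda_{j-1}, lambda_j); lambda_{-1} = K-D, lambda_0 = D,
   lambda_{i+1} = lambda_{i-1} mod lambda_i, and 0 once a 0 has been reached. *)
Fixpoint lam_pair (K D j : nat) : nat * nat :=
  match j with
  | 0 => (K - D, D)
  | j'.+1 => let: (a, b) := lam_pair K D j' in (b, if b == 0 then 0 else a %% b)
  end.

(* lam_prev K D n = lambda_{n-1}  (so lam_prev K D 0 = lambda_{-1} = K - D) *)
Definition lam_prev (K D n : nat) : nat := (lam_pair K D n).1.
Definition lam (K D n : nat) : nat := lam_prev K D n.+1.
(* beta K D i = beta_i = lambda_{i-1} div lambda_i  (= 0 when lambda_i = 0) *)
Definition beta (K D i : nat) : nat := lam_prev K D i %/ lam K D i.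
(* l = the (first) index with lambda_{l+1} = 0; it is < K since lambda is
   strictly decreasing from lambda_0 = D <= K - 1. *)
Definition ell (K D : nat) : nat := find (fun n => lam K D n.+1 == 0) (iota 0 K).

(* I_{n x m} (n | m, horizontal copies of identities): entry (a,b) = 1 iff b mod n = a.
   I_{m x n} (vertical copies): entry (a,b) = 1 iff a mod n = b. *)
Definition AIR (K D r c : nat) : bool :=
  let l := ell K D in
  [&& r < K, c < K - D &
   [|| (r < K - D) && (r == c),
       (* even submatrices I_{lambda_{2i} x beta_{2i} lambda_{2i}}, 0 <= 2i <= l,
          absent if i = 0 and beta_0 = 0 *)
       has (fun i =>
          [&& 2 * i <= l, ~~ ((i == 0) && (beta K D 0 == 0)),
              K - lam K D (2 * i) <= r,
              K - D - lam_prev K D (2 * i) <= c,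
              c < K - D - lam K D (2 * i).+1 &
              (c - (K - D - lam_prev K D (2 * i))) %% lam K D (2 * i)
                == r - (K - lam K D (2 * i))]) (iota 0 K)
     | (* odd submatrices I_{beta_{2i+1} lambda_{2i+1} x lambda_{2i+1}}, 1 <= 2i+1 <= l *)
       has (fun i =>
          [&& (2 * i).+1 <= l,
              K - lam K D (2 * i) <= r,
              r < K - lam K D (2 * i).+2,
              K - D - lam K D (2 * i).+1 <= c &
              (r - (K - lam K D (2 * i))) %% lam K D (2 * i).+1
                == c - (K - D - lam K D (2 * i).+1)]) (iota 0 K)]].

Definition cw (K D : nat) (x : nat -> bool) (k : nat) : bool :=
  \big[addb/false]_(j < K) (AIR K D j k && x j).

Definition sumx (K : nat) (x : nat -> bool) (s : seq nat) : bool :=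
  \big[addb/false]_(m <- s) x (m %% K).

Definition sideinfo (K D k m : nat) : bool :=
  has (fun t => (k + t) %% K == m %% K) (iota 1 D).

Definition ddown (K D k : nat) : nat :=
  last k [seq r <- iota k.+1 (K - k.+1) | AIR K D r k] - k.
Definition mu (K D k : nat) : nat :=
  head k [seq c <- iota k.+1 (K - D - k.+1) | AIR K D (k + ddown K D k) c] - k.
(* the increasing list [t_{k,1}; ...; t_{k,p_k}] of row distances from row
   k + d_down(k) of the 1-entries of column k + mu_k strictly below that row;
   p_k is its size. *)
Definition tlist (K D k : nat) : seq nat :=
  let r0 := k + ddown K D k in
  [seq r - r0 | r <- iota r0.+1 (K - r0.+1) & AIR K D r (k + mu K D k)].

Definition Dset (K D i k : nat) : bool :=
  (K - D - lam_prev K D (2 * i) <= k) &&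
  (k < K - D - lam_prev K D (2 * i) + (beta K D (2 * i) - 1) * lam K D (2 * i)).
Definition Eset (K D i k : nat) : bool :=
  (K - D - lam_prev K D (2 * i) + (beta K D (2 * i) - 1) * lam K D (2 * i) <= k) &&
  (k < K - D - lam K D (2 * i).+1).

(* the integer c >= 0 with k - (K-D-lambda_{2i-1}) = (beta_{2i}-1) lambda_{2i} + c lambda_{2i+1} + d,
   0 <= d < lambda_{2i+1} *)
Definition cE (K D i k : nat) : nat :=
  (k - (K - D - lam_prev K D (2 * i) + (beta K D (2 * i) - 1) * lam K D (2 * i)))
    %/ lam K D (2 * i).+1.

(* the index list of  sum_{z=1}^{i} sum_{j=1}^{beta_{2z-1}} x_{m + D - lambda_{2z-2} + j lambda_{2z-1}}
   (z = z'+1 with z' in [0:i-1]) *)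
Definition nu_base (K D m i : nat) : seq nat :=
  flatten [seq [seq m + (D - lam K D (2 * z)) + j * lam K D (2 * z).+1
               | j <- iota 1 (beta K D (2 * z).+1)] | z <- iota 0 i].

From mathcomp Require Import all_boot zify.
Set Implicit Arguments. Unset Strict Implicit. Unset Printing Implicit Defensive.

(** Column [c < K - D] of the AIR matrix lies at level [i] when
    [K - D - λ_{2i-1} <= c < K - D - λ_{2i+1}].  Its 1-entries are the diagonal entry [c],
    the entries [c + D - λ_{2z} + j λ_{2z+1}] of the odd submatrices [2z+1 < 2i+1], which all
    lie in [(c, c + D - λ_{2i}]], and at most one entry of the even submatrix [2i], in a row
    [>= K - λ_{2i}].  So [c_k] is [x_k] plus side information plus one foreign symbol, which
    the receiver cancels over F_2 with coded symbols sharing it: in (i) column [k + λ_{2i}] has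
    the same even row; in (ii) column [k + μ_k] contains that row [r0], and each of its rows
    [r > r0] is in turn the even row of column [k + (r - r0)]; in (iii) the even row is [k + D]
    or absent.  In (iv), the rows [<= k] of column [k mod (K - D)] are congruent to [k] modulo
    [K - D], so all of them except [k] lie in the cyclic side-information window of [R_k]. *)

Section EuclideanSequence.
Variables K D : nat.

Local Notation lp := (lam_prev K D).

Lemma lam_prevSS j : lp j.+2 = if lp j.+1 == 0 then 0 else lp j %% lp j.+1.
Proof. by rewrite /lam_prev /=; case: (lam_pair K D j). Qed.

Lemma lam_prev0 : lp 0 = K - D. Proof. by []. Qed.
Lemma lam_prev1 : lp 1 = D. Proof. by []. Qed.

Lemma lam_prev_leS j : lp j.+2 <= lp j.+1.
Proof. by rewrite lam_prevSS; case: eqP => // /eqP nz; apply: ltnW; rewrite ltn_mod lt0n. Qed.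

Lemma lam_prev_ltS j : 0 < lp j.+1 -> lp j.+2 < lp j.+1.
Proof. by move=> lp_gt0; rewrite lam_prevSS eqn0Ngt lp_gt0 ltn_mod. Qed.

Lemma lam_prev_antimono j j' : 0 < j <= j' -> lp j' <= lp j.
Proof.
case/andP=> j_gt0; elim: j' => [|j' IH]; first by rewrite leqn0 => /eqP j0; rewrite j0 in j_gt0.
rewrite leq_eqVlt => /orP[/eqP <- // | ltjj'].
case: j' IH ltjj' => [|j'] IH ltjj'; first by rewrite ltnS leqn0 (gtn_eqF j_gt0) in ltjj'.
exact: leq_trans (lam_prev_leS j') (IH ltjj').
Qed.

Lemma lam_prev_leD j : lp j.+1 <= D.
Proof. by rewrite -lam_prev1 lam_prev_antimono. Qed.

Lemma lam_prevSS_le j : lp j.+2 <= K - D.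
Proof.
apply: leq_trans (@lam_prev_antimono 2 j.+2 _) _ => //.
by rewrite lam_prevSS lam_prev1; case: eqP => // _; apply: leq_mod.
Qed.

Lemma lam_prev_even_le i : lp (2 * i) <= K - D.
Proof. by case: i => [|i]; rewrite ?lam_prev0 // mulnSr addn2 lam_prevSS_le. Qed.

Lemma lam_prev_eq0 j j' : lp j.+1 = 0 -> j < j' -> lp j' = 0.
Proof. by move=> lp0 ltjj'; apply/eqP; rewrite -leqn0 -lp0 lam_prev_antimono. Qed.

Lemma lam_prev_divn_eq j : 0 < lp j.+1 -> lp j = beta K D j * lp j.+1 + lp j.+2.
Proof. by move=> lp_gt0; rewrite lam_prevSS eqn0Ngt lp_gt0 /beta /lam -divn_eq. Qed.

Lemma lam_prev_gt0 j : 0 < beta K D j -> 0 < lp j.+1.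
Proof. by rewrite /beta /lam; case: (lp j.+1) => //; rewrite divn0. Qed.

Lemma lam_prev_le_subn j : lp j.+1 <= D - j.
Proof.
elim: j => [|j IH]; first by rewrite subn0.
have [lp0|lp_gt0] := posnP (lp j.+1); first by rewrite (@lam_prev_eq0 j j.+2).
by have := lam_prev_ltS lp_gt0; lia.
Qed.

Hypotheses (D_gt0 : 0 < D) (D_lt_K : D < K).

Lemma ell_spec :
  [/\ ell K D < K, lp (ell K D).+2 = 0 & forall j, j <= ell K D -> 0 < lp j.+1].
Proof.
pose P n := lam K D n.+1 == 0.
have hasP : has P (iota 0 K).
  apply/hasP; exists D.-1; first by rewrite mem_iota; lia.
  by rewrite /P /lam prednK // -leqn0 -(subnn D) lam_prev_le_subn.
have ell_lt : ell K D < K by move: hasP; rewrite has_find size_iota.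
split => // [|j le_j_ell].
  by have := nth_find 0 hasP; rewrite -/(ell K D) nth_iota // add0n => /eqP.
case: j le_j_ell => [|j] le_j_ell; first by rewrite lam_prev1.
have := @before_find _ 0 P (iota 0 K) j le_j_ell.
by rewrite nth_iota ?add0n /P /lam ?lt0n //; lia.
Qed.

Lemma le_ell j : 0 < lp j.+1 -> j <= ell K D.
Proof.
case: ell_spec => _ lp0 _ lp_gt0; rewrite leqNgt; apply/negP => lt_ell.
by rewrite (@lam_prev_eq0 (ell K D).+1 j.+1) in lp_gt0.
Qed.

End EuclideanSequence.

Lemma iota_split a len m : a <= m < a + len ->
  iota a len = iota a (m - a) ++ m :: iota m.+1 (a + len - m.+1).
Proof.
case/andP=> le_am lt_m; rewrite {1}(_ : len = (m - a) + (a + len - m.+1).+1); last lia.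
by rewrite iotaD subnKC.
Qed.

Lemma filter_iota_nil (P : pred nat) a len :
  (forall r, a <= r < a + len -> ~~ P r) -> [seq r <- iota a len | P r] = [::].
Proof.
move=> notP; apply/eqP; rewrite -[_ == _]negbK -has_filter.
by apply/hasPn => r /[!mem_iota] /notP.
Qed.

Lemma last_filter_iota (P : pred nat) a len m d : a <= m < a + len -> P m ->
  (forall r, m < r < a + len -> ~~ P r) -> last d [seq r <- iota a len | P r] = m.
Proof.
move=> m_in Pm notP; rewrite (iota_split m_in) filter_cat /= Pm last_cat.
rewrite (@filter_iota_nil _ m.+1) //.
by move=> r r_in; apply: notP; lia.
Qed.

Lemma head_filter_iota (P : pred nat) a len m d : a <= m < a + len -> P m ->
  (forall r, a <= r < m -> ~~ P r) -> head d [seq r <- iota a len | P r] = m.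
Proof.
move=> m_in Pm notP; rewrite (iota_split m_in) filter_cat /= Pm filter_iota_nil //.
by move=> r r_in; apply: notP; lia.
Qed.

Lemma modn_eq_gap a b c p : 0 < p -> a <= b < c ->
  (b - a) %% p = (c - a) %% p -> b + p <= c.
Proof.
move=> p_gt0 /andP[le_ab lt_bc] /esym/eqP; rewrite eqn_mod_dvd; last lia.
by move/(dvdn_leq _); rewrite subn_gt0; lia.
Qed.

Lemma mul2_uphalf n : 2 * uphalf n = odd n + n.
Proof. by rewrite uphalf_half mulnDr mul2n -[in RHS](odd_double_half n); case: odd; lia. Qed.

Section AIRMatrix.
Variables K D : nat.
Hypotheses (D_gt0 : 0 < D) (D_lt_K : D < K).

Local Notation lp := (lam_prev K D).

Definition at_level c i := (K - D - lp (2 * i) <= c) && (c < K - D - lp (2 * i).+2).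

Lemma at_levelS c i :
  at_level c i.+1 = (K - D - lp (2 * i).+2 <= c) && (c < K - D - lp (2 * i).+4).
Proof. by rewrite /at_level mulnSr addn2. Qed.

(* [even_row c i] is the row of the entry of the even submatrix [2i] in column [c] (it exists
   iff [λ_{2i} > 0]); [odd_row c z j] is the row of the [j]-th entry of the odd submatrix
   [2z+1] in column [c]. *)
Definition even_row c i := K - lp (2 * i).+1 + (c - (K - D - lp (2 * i))) %% lp (2 * i).+1.

Definition odd_row c z j := c + (D - lp (2 * z).+1) + j * lp (2 * z).+2.

Lemma at_level_unique c i i' : at_level c i -> at_level c i' -> i = i'.
Proof.
move=> /andP[c_ge c_lt] /andP[c_ge' c_lt']; case: (ltngtP i i') => // [lt_ii' | lt_i'i].
  by have := @lam_prev_antimono K D (2 * i).+2 (2 * i'); lia.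
by have := @lam_prev_antimono K D (2 * i').+2 (2 * i); lia.
Qed.

Lemma AIR_diag c : c < K - D -> AIR K D c c.
Proof. by move=> c_lt; rewrite /AIR c_lt eqxx /=; lia. Qed.

Lemma AIR_even_row c i : at_level c i -> 0 < lp (2 * i).+1 -> AIR K D (even_row c i) c.
Proof.
case/andP=> c_ge c_lt p_gt0; have le_ell := le_ell D_gt0 D_lt_K p_gt0.
have [ell_lt _ _] := ell_spec D_gt0 D_lt_K.
have p_leD := lam_prev_leD K D (2 * i).
have md_lt := ltn_pmod (c - (K - D - lp (2 * i))) p_gt0.
rewrite /AIR /even_row; apply/and3P; split; [lia | lia |].
apply/orP; right; apply/orP; left; apply/hasP; exists i; first by rewrite mem_iota; lia.
rewrite /lam le_ell c_ge c_lt /= addKn eqxx leq_addr !andbT.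
apply/negP => /andP[/eqP i0 /eqP beta0]; move: c_lt c_ge; rewrite i0 muln0 lam_prev0 subnn.
by have := @lam_prev_divn_eq K D 0; rewrite lam_prev0 lam_prev1 beta0 => /(_ D_gt0); lia.
Qed.

Lemma AIR_odd_row c z j : 0 < j <= beta K D (2 * z).+1 ->
  K - D - lp (2 * z).+2 <= c < K - D -> AIR K D (odd_row c z j) c.
Proof.
case: j => [|j] /andP[// _ le_beta] /andP[c_ge c_lt].
have q_gt0 : 0 < lp (2 * z).+2 by apply: lam_prev_gt0; case: beta le_beta.
have le_ell := le_ell D_gt0 D_lt_K q_gt0.
have [ell_lt _ _] := ell_spec D_gt0 D_lt_K.
have p_eq := lam_prev_divn_eq q_gt0.
have p_leD := lam_prev_leD K D (2 * z).
have q_le := lam_prevSS_le K D (2 * z).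
have jq_le : j.+1 * lp (2 * z).+2 <= beta K D (2 * z).+1 * lp (2 * z).+2.
  by rewrite leq_mul2r le_beta orbT.
have row_off : odd_row c z j.+1 - (K - lp (2 * z).+1)
               = j * lp (2 * z).+2 + (c - (K - D - lp (2 * z).+2)).
  by rewrite /odd_row (mulSn j); lia.
rewrite /AIR /odd_row; apply/and3P; split; [lia | done |].
apply/orP; right; apply/orP; right; apply/hasP; exists z; first by rewrite mem_iota; lia.
rewrite /lam le_ell c_ge -/(odd_row c z j.+1) row_off modnMDl modn_small ?eqxx ?andbT; last lia.
by rewrite /odd_row; apply/andP; split; lia.
Qed.

Lemma AIR_cases r c : AIR K D r c ->
  [\/ r = c /\ c < K - D,
      exists i, [/\ at_level c i, 0 < lp (2 * i).+1 & r = even_row c i]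
    | exists z j, [/\ 0 < j <= beta K D (2 * z).+1,
                      K - D - lp (2 * z).+2 <= c < K - D & r = odd_row c z j]].
Proof.
have [_ _ lp_gt0] := ell_spec D_gt0 D_lt_K.
rewrite /AIR /lam => /and3P[r_lt c_lt /or3P[/andP[_ /eqP->] | /hasP[i _] | /hasP[z _]]].
- by apply: Or31.
- case/and5P=> le_ell _ r_ge c_ge /andP[c_lt' /eqP md]; apply: Or32; exists i.
  by rewrite /at_level /even_row c_ge c_lt' md lp_gt0 //; split => //; lia.
case/and5P=> le_ell r_ge r_lt' c_ge /eqP md; apply: Or33.
have q_gt0 : 0 < lp (2 * z).+2 by apply: lp_gt0.
have p_eq := lam_prev_divn_eq q_gt0.
have p_leD := lam_prev_leD K D (2 * z).
have q_le := lam_prevSS_le K D (2 * z).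
set a := r - (K - lp (2 * z).+1) in md.
have a_eq := divn_eq a (lp (2 * z).+2); rewrite md in a_eq.
exists z, (a %/ lp (2 * z).+2).+1; split; last 2 first.
- by rewrite c_ge.
- by rewrite /odd_row (mulSn (a %/ _)); move: (a %/ _) a_eq => d; rewrite /a; lia.
by rewrite ltn0Sn /= ltn_divLR //; rewrite /a; lia.
Qed.

Lemma odd_row_bounds c z j : 0 < j <= beta K D (2 * z).+1 ->
  c + (D - lp (2 * z).+1) + lp (2 * z).+2 <= odd_row c z j <= c + (D - lp (2 * z).+3).
Proof.
case/andP=> j_gt0 le_beta.
have q_gt0 : 0 < lp (2 * z).+2 by apply/lam_prev_gt0/(leq_trans j_gt0).
have p_eq := lam_prev_divn_eq q_gt0.
have p_leD := lam_prev_leD K D (2 * z).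
have : j * lp (2 * z).+2 <= beta K D (2 * z).+1 * lp (2 * z).+2 by rewrite leq_mul2r le_beta orbT.
have : lp (2 * z).+2 <= j * lp (2 * z).+2 by rewrite leq_pmull.
by rewrite /odd_row; lia.
Qed.

Definition colsupp c := [seq r <- iota 0 K | AIR K D r c].

Lemma mem_colsupp r c : (r \in colsupp c) = AIR K D r c.
Proof.
rewrite mem_filter mem_iota add0n andbC; case rc: (AIR K D r c); rewrite ?andbF //=.
by move: rc; rewrite /AIR => /and3P[->].
Qed.

Lemma mem_nu_baseP c i r :
  reflect (exists z j, [/\ z < i, 0 < j <= beta K D (2 * z).+1 & r = odd_row c z j])
          (r \in nu_base K D c i).
Proof.
apply: (iffP flattenP) => [[s /mapP[z z_in ->] /mapP[j j_in ->]] | [z [j [lt_zi j_in ->]]]].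
  by exists z, j; move: z_in j_in; rewrite !mem_iota; split => //; lia.
exists [seq odd_row c z j' | j' <- iota 1 (beta K D (2 * z).+1)]; apply/mapP.
  by exists z; rewrite ?mem_iota.
by exists j; rewrite // mem_iota; lia.
Qed.

Lemma nu_baseS c i : nu_base K D c i.+1
  = nu_base K D c i ++ [seq odd_row c i j | j <- iota 1 (beta K D (2 * i).+1)].
Proof. by rewrite /nu_base -[i.+1]addn1 iotaD map_cat flatten_cat /= cats0. Qed.

Lemma nu_base_bounds c i r : r \in nu_base K D c i -> c < r <= c + (D - lp (2 * i).+1).
Proof.
case/mem_nu_baseP=> z [j [lt_zi j_in ->]]; have := odd_row_bounds c j_in.
have := @lam_prev_antimono K D (2 * z).+3 (2 * i).+1.
have := lam_prev_leD K D (2 * i); have := lam_prev_leD K D (2 * z).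
by have := lam_prev_gt0 (leq_trans (proj1 (andP j_in)) (proj2 (andP j_in))); lia.
Qed.

Lemma nu_base_uniq c i : uniq (nu_base K D c i).
Proof.
elim: i => // i IH; rewrite nu_baseS cat_uniq IH /=.
have [p0|p_gt0] := posnP (lp (2 * i).+2); first by rewrite /beta /lam p0 divn0.
apply/andP; split.
  apply/hasPn => _ /mapP[j j_in ->]; apply/negP => /nu_base_bounds.
  by have := @odd_row_bounds c i j; rewrite mem_iota in j_in; lia.
by rewrite map_inj_uniq ?iota_uniq // => j j' /eqP; rewrite eqn_add2l eqn_pmul2r // => /eqP.
Qed.

Lemma mem_colsupp_level c i r : at_level c i -> (r \in colsupp c)
  = [|| r == c, r \in nu_base K D c i | (0 < lp (2 * i).+1) && (r == even_row c i)].
Proof.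
move=> c_lev; have /andP[c_ge c_lt] := c_lev.
rewrite mem_colsupp; apply/idP/idP.
  case/AIR_cases => [[-> _] | [i' [c_lev' p_gt0 ->]] | [z [j [j_in /andP[c_ge' _] ->]]]].
  - by rewrite eqxx.
  - by move: p_gt0; rewrite -(at_level_unique c_lev c_lev') => ->; rewrite eqxx !orbT.
  apply/orP; right; apply/orP; left; apply/mem_nu_baseP; exists z, j; split => //.
  by rewrite ltnNge; apply/negP => le_iz; have := @lam_prev_antimono K D (2 * i).+2 (2 * z).+2; lia.
case/or3P => [/eqP -> | /mem_nu_baseP[z [j [lt_zi j_in ->]]] | /andP[p_gt0 /eqP ->]].
- by apply: AIR_diag; lia.
- by apply: AIR_odd_row => //; have := @lam_prev_antimono K D (2 * z).+2 (2 * i); lia.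
- exact: AIR_even_row.
Qed.

Definition even_rows c i := if 0 < lp (2 * i).+1 then [:: even_row c i] else [::].

Lemma perm_colsupp_level c i : at_level c i ->
  perm_eq (colsupp c) (c :: nu_base K D c i ++ even_rows c i).
Proof.
move=> c_lev; have /andP[c_ge c_lt] := c_lev.
have even_ge : K - lp (2 * i).+1 <= even_row c i by apply: leq_addr.
have p_leD := lam_prev_leD K D (2 * i).
apply: uniq_perm; first by rewrite filter_uniq ?iota_uniq.
  rewrite /= mem_cat cat_uniq nu_base_uniq /even_rows; case: ifP => _ /=; rewrite ?orbF ?andbT.
    rewrite inE negb_or -andbA; apply/and3P; split; try (apply/negP => /nu_base_bounds); lia.
  by apply/negP => /nu_base_bounds; lia.
move=> r; rewrite (mem_colsupp_level _ c_lev) in_cons mem_cat /even_rows.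
by case: ifP; rewrite ?inE ?orbF.
Qed.

Lemma cw_colsupp x c : cw K D x c = sumx K x (colsupp c).
Proof.
rewrite /cw /sumx big_filter -(big_mkord xpredT (fun j => AIR K D j c && x j)).
rewrite [RHS]big_mkcond /= big_seq [RHS]big_seq /index_iota subn0.
apply: eq_bigr => j; rewrite mem_iota add0n => /andP[_ j_lt].
by rewrite modn_small //; case: AIR.
Qed.

Lemma sumx_cons x r s : sumx K x (r :: s) = x (r %% K) (+) sumx K x s.
Proof. exact: big_cons. Qed.

Lemma sumx_nil x : sumx K x [::] = false.
Proof. exact: big_nil. Qed.

Lemma sumx_cat x s t : sumx K x (s ++ t) = sumx K x s (+) sumx K x t.
Proof. exact: big_cat. Qed.

Lemma perm_sumx x s t : perm_eq s t -> sumx K x s = sumx K x t.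
Proof. exact: perm_big. Qed.

Lemma sideinfo_ahead k e : k < e <= k + D -> sideinfo K D k e.
Proof.
move=> e_in; apply/hasP; exists (e - k); first by rewrite mem_iota; lia.
by rewrite subnKC //; lia.
Qed.

Lemma even_row_addp c i : K - D - lp (2 * i) <= c -> even_row (c + lp (2 * i).+1) i = even_row c i.
Proof. by move=> c_ge; rewrite /even_row -addnBAC // modnDr. Qed.

Lemma even_row_ge c i : K - lp (2 * i).+1 <= even_row c i.
Proof. exact: leq_addr. Qed.

Lemma even_row_bounds c i : 0 < lp (2 * i).+1 -> K - lp (2 * i).+1 <= even_row c i < K.
Proof.
move=> p_gt0; have := ltn_pmod (c - (K - D - lp (2 * i))) p_gt0.
by have := lam_prev_leD K D (2 * i); rewrite /even_row; lia.
Qed.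

Lemma ddown_level k i : at_level k i -> 0 < lp (2 * i).+1 -> ddown K D k = even_row k i - k.
Proof.
move=> k_lev p_gt0; have /andP[_ k_lt] := k_lev.
have := even_row_bounds k p_gt0; have := lam_prev_leD K D (2 * i) => p_leD row_in.
rewrite /ddown (@last_filter_iota _ _ _ (even_row k i)); first by [].
- by lia.
- by rewrite -mem_colsupp (mem_colsupp_level _ k_lev) p_gt0 eqxx !orbT.
move=> r r_in; rewrite -mem_colsupp (mem_colsupp_level _ k_lev).
by apply/negP => /or3P[/eqP|/nu_base_bounds|/andP[_ /eqP]]; lia.
Qed.

Lemma odd_row_inj c c' z j j' : K - D - lp (2 * z).+2 <= c < K - D ->
  K - D - lp (2 * z).+2 <= c' < K - D -> odd_row c z j = odd_row c' z j' -> c = c'.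
Proof.
wlog le_jj' : c c' j j' / j <= j'.
  by move=> wlog_j c_in c'_in eq_row; case: (leqP j j') => [|/ltnW] le;
     [apply: (wlog_j _ _ j j') | symmetry; apply: (wlog_j _ _ j' j)].
rewrite /odd_row -(subnKC le_jj') mulnDl => c_in c'_in.
by case: (j' - j) => [|d]; [lia | rewrite (mulSn d); move: (j * _) (d * _); lia].
Qed.

Lemma AIR_even_row_right k c i : at_level k i -> 0 < lp (2 * i).+1 ->
  AIR K D (even_row k i) c -> k < c ->
  [\/ k + lp (2 * i).+1 <= c,
      K - D - lp (2 * i).+2 <= c
        /\ exists2 j, 0 < j <= beta K D (2 * i).+1 & even_row k i = odd_row c i j,
      at_level c i.+1 /\ even_row k i = even_row c i.+1
    | K - D - lp (2 * i).+4 <= c /\ K - lp (2 * i).+3 <= even_row k i].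
Proof.
move=> /andP[k_ge k_lt] p_gt0 + lt_kc; have := even_row_bounds k p_gt0.
have := lam_prev_leD K D (2 * i); set r0 := even_row k i => p_leD r0_in.
case/AIR_cases => [[r0_eq c_lt] | [i' [/andP[c_ge c_lt] p'_gt0 r0_eq]]
                  | [z [j [j_in /andP[c_ge c_lt] r0_eq]]]].
- by lia.
- have := even_row_bounds c p'_gt0; rewrite -r0_eq => r0_in'.
  case: (ltngtP i' i) => [lt_i'i | lt_ii' | eq_i'i]; last subst i'.
  + by have := @lam_prev_antimono K D (2 * i').+2 (2 * i); lia.
  + case: (ltngtP i' i.+1) => [|lt_i1i'|eq_i'i1]; [lia | | subst i'].
    * apply: Or44; have := @lam_prev_antimono K D (2 * i).+4 (2 * i').
      by have := @lam_prev_antimono K D (2 * i).+3 (2 * i').+1; lia.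
    * by apply: Or43; rewrite at_levelS; rewrite mulnSr addn2 in c_ge c_lt; rewrite c_ge c_lt.
  + apply: Or41; apply: (@modn_eq_gap (K - D - lp (2 * i))) => //; first lia.
    by move: r0_eq; rewrite /r0 /even_row => /addnI.
- have := odd_row_bounds c j_in; rewrite -r0_eq => r0_in'.
  case: (ltngtP z i) => [lt_zi | lt_iz | eq_zi]; last subst z.
  + by have := @lam_prev_antimono K D (2 * z).+3 (2 * i).+1; lia.
  + apply: Or44; have := @lam_prev_antimono K D (2 * i).+4 (2 * z).+2.
    by have := @lam_prev_antimono K D (2 * i).+3 (2 * z).+1; lia.
  + by apply: Or42; split=> //; exists j.
Qed.

Lemma cw_level x c i : at_level c i ->
  cw K D x c = x c (+) sumx K x (nu_base K D c i) (+) sumx K x (even_rows c i).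
Proof.
move=> c_lev; have /andP[_ c_lt] := c_lev.
rewrite cw_colsupp (perm_sumx _ (perm_colsupp_level c_lev)) sumx_cons sumx_cat addbA.
by rewrite modn_small //; lia.
Qed.

Lemma mu_first_hit k i m : at_level k i -> 0 < lp (2 * i).+1 -> k < m < K - D ->
  AIR K D (even_row k i) m -> (forall c, k < c < m -> ~~ AIR K D (even_row k i) c) ->
  mu K D k = m - k.
Proof.
move=> k_lev p_gt0 m_in hit miss; have := even_row_bounds k p_gt0.
have := lam_prev_leD K D (2 * i) => p_leD r0_in.
rewrite /mu (ddown_level k_lev p_gt0) subnKC; last lia.
by rewrite (@head_filter_iota _ _ _ m) //; lia.
Qed.

Lemma Dset_spec i k : Dset K D i k ->
  [/\ 0 < lp (2 * i).+1, at_level k i & at_level (k + lp (2 * i).+1) i].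
Proof.
rewrite /Dset /lam mulnBl mul1n => /andP[k_ge k_lt].
have p_gt0 : 0 < lp (2 * i).+1 by rewrite lt0n; apply: contraTneq k_lt => ->; rewrite muln0; lia.
have := lam_prev_divn_eq p_gt0; have := lam_prev_even_le K D i.
by rewrite /at_level; split => //; apply/andP; split; lia.
Qed.

Lemma mu_Dset i k : Dset K D i k -> mu K D k = lp (2 * i).+1.
Proof.
case/Dset_spec=> p_gt0 k_lev kp_lev; have /andP[k_ge _] := k_lev.
have /andP[_ kp_lt] := kp_lev; have := lam_prev_leD K D (2 * i) => p_leD.
rewrite (@mu_first_hit _ i (k + lp (2 * i).+1)) ?addKn //; first lia.
  by rewrite -(even_row_addp k_ge); apply: AIR_even_row.
move=> c c_in; apply/negP => hit; have lt_kc : k < c by case/andP: c_in.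
have := @lam_prev_antimono K D (2 * i).+2 (2 * i).+4.
case: (AIR_even_row_right k_lev p_gt0 hit lt_kc) => [|[+ _]|[+ _]|[+ _]]; try lia.
by rewrite at_levelS => /andP[]; lia.
Qed.

Lemma all_sideinfo_nu_base k c i : k <= c -> c + (D - lp (2 * i).+1) <= k + D ->
  all (sideinfo K D k) (nu_base K D c i).
Proof. by move=> le_kc le_cD; apply/allP => r /nu_base_bounds r_in; apply: sideinfo_ahead; lia. Qed.

Lemma decode_Dset x i k : Dset K D i k ->
  let m := k + mu K D k in
  let nuk := nu_base K D k i in
  let num := m :: nu_base K D m i in
  x k = cw K D x k (+) cw K D x m (+) sumx K x nuk (+) sumx K x num
  /\ all (sideinfo K D k) (nuk ++ num).
Proof.
move=> kD; have [p_gt0 k_lev kp_lev] := Dset_spec kD; rewrite (mu_Dset kD) /=.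
have /andP[k_ge _] := k_lev; have /andP[_ kp_lt] := kp_lev.
have p_leD := lam_prev_leD K D (2 * i).
split.
  rewrite (cw_level x k_lev) (cw_level x kp_lev) /even_rows p_gt0 (even_row_addp k_ge).
  rewrite !sumx_cons sumx_nil (@modn_small (k + _)); last lia.
  by move: (x k) (x (k + _)) (x (_ %% K)) (sumx _ _ _) (sumx _ _ _); do 5!case.
rewrite all_cat /= !all_sideinfo_nu_base ?andbT //; try lia.
by apply: sideinfo_ahead; lia.
Qed.

Lemma even_row_last_period k i : 0 < lp (2 * i).+1 -> at_level k i ->
  K - D - lp (2 * i).+1 - lp (2 * i).+2 <= k -> even_row k i = k + D + lp (2 * i).+2.
Proof.
move=> p_gt0 /andP[k_ge k_lt] k_ge'; have := lam_prev_divn_eq p_gt0.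
have := lam_prev_even_le K D i; have := lam_prev_leD K D (2 * i).
case: (beta K D (2 * i)) => [|b] p_leD lp_le lp_eq; first by lia.
rewrite /even_row (_ : k - _ = b * lp (2 * i).+1 + (k - (K - D - lp (2 * i).+1 - lp (2 * i).+2))).
  by rewrite modnMDl modn_small; lia.
by rewrite (mulSn b) in lp_eq; lia.
Qed.

Lemma last_columns_level k : K - D - lam K D (ell K D) <= k < K - D -> at_level k (uphalf (ell K D)).
Proof.
case/andP=> k_ge k_lt; have [_ lp0 _] := ell_spec D_gt0 D_lt_K.
have two_i := mul2_uphalf (ell K D).
rewrite /at_level (@lam_prev_eq0 _ _ (ell K D).+1 (2 * uphalf (ell K D)).+2) //; last lia.
rewrite subn0 k_lt andbT.
have [->|ell_gt0] := posnP (ell K D); first by rewrite lam_prev0; lia.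
by have := @lam_prev_antimono K D (2 * uphalf (ell K D)) (ell K D).+1; rewrite /lam in k_ge; lia.
Qed.

Lemma decode_last_columns x k : K - D - lam K D (ell K D) <= k < K - D ->
  let nuk := (if odd (ell K D) then [::] else [:: k + D]) ++ nu_base K D k (uphalf (ell K D)) in
  x k = cw K D x k (+) sumx K x nuk /\ all (sideinfo K D k) nuk.
Proof.
move=> k_in; have k_lev := last_columns_level k_in; have [_ lp0 lp_gt0] := ell_spec D_gt0 D_lt_K.
have /andP[_ k_lt] := k_in; have two_i := mul2_uphalf (ell K D).
set i := uphalf (ell K D) in k_lev two_i *.
rewrite /= (cw_level x k_lev) /even_rows sumx_cat all_cat all_sideinfo_nu_base //; last first.
  by have := lam_prev_leD K D (2 * i); lia.
case: (boolP (odd (ell K D))) two_i => [odd_l | even_l] two_i.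
  rewrite (@lam_prev_eq0 _ _ (ell K D).+1 (2 * i).+1) // ?sumx_nil; last lia.
  by move: (x k) (sumx _ _ _); do 2!case.
have p_gt0 : 0 < lp (2 * i).+1 by apply: lp_gt0; lia.
have q0 : lp (2 * i).+2 = 0 by apply: (@lam_prev_eq0 _ _ (ell K D).+1); lia.
have k_ge : K - D - lp (2 * i).+1 - lp (2 * i).+2 <= k.
  by rewrite q0 subn0 (_ : 2 * i = ell K D); [case/andP: k_in | rewrite two_i].
rewrite p_gt0 (even_row_last_period p_gt0 k_lev k_ge) q0 addn0.
rewrite !sumx_cons sumx_nil /=; split; last by rewrite (@sideinfo_ahead k (k + D)) //; lia.
by move: (x k) (x ((k + D) %% K)) (sumx _ _ _); do 3!case.
Qed.

Lemma Eset_spec i k : i < uphalf (ell K D) -> Eset K D i k ->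
  [/\ 0 < lp (2 * i).+1, 0 < lp (2 * i).+2, at_level k i,
      K - D - lp (2 * i).+1 - lp (2 * i).+2 <= k
    & cE K D i k = (k - (K - D - lp (2 * i).+1 - lp (2 * i).+2)) %/ lp (2 * i).+2].
Proof.
move=> lt_i; have [_ _ lp_gt0] := ell_spec D_gt0 D_lt_K; have := mul2_uphalf (ell K D).
move=> two_i; have q_gt0 : 0 < lp (2 * i).+2 by apply: lp_gt0; case: odd two_i; lia.
have p_gt0 : 0 < lp (2 * i).+1 by apply: lp_gt0; case: odd two_i; lia.
have := lam_prev_divn_eq p_gt0; have := lam_prev_even_le K D i.
rewrite /Eset /cE /lam mulnBl mul1n => lp_le lp_eq /andP[k_ge k_lt].
have k_ge' : K - D - lp (2 * i).+1 - lp (2 * i).+2 <= k by lia.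
split=> //; first by rewrite /at_level k_lt andbT; lia.
congr (_ %/ _); case: (beta K D (2 * i)) lp_eq k_ge => [|b]; first lia.
by rewrite (mulSn b); lia.
Qed.

Lemma rows_upto_odd_row m i cc r : K - D - lp (2 * i).+2 <= m < K - D ->
  cc < beta K D (2 * i).+1 ->
  let r0 := odd_row m i cc.+1 in
  (r <= r0) && AIR K D r m
  = (r \in m :: nu_base K D m i ++ [seq odd_row m i j | j <- iota 1 cc] ++ [:: r0]).
Proof.
move=> /andP[m_ge m_lt] cc_lt r0; have := lam_prev_leD K D (2 * i) => p_leD.
have r0_in : 0 < cc.+1 <= beta K D (2 * i).+1 by [].
have := odd_row_bounds m r0_in; rewrite -/r0 => r0_bds.
have j_le j : j \in iota 1 cc -> 0 < j <= beta K D (2 * i).+1 /\ odd_row m i j < r0.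
  rewrite mem_iota /r0 /odd_row ltn_add2l => j_in; split; first lia.
  by rewrite ltn_pmul2r; [lia | apply: lam_prev_gt0; lia].
rewrite in_cons !mem_cat inE; apply/idP/idP.
  rewrite andbC; case/andP=> /AIR_cases [[-> _] | [i' [/andP[m_ge' m_lt'] _ ->]]
                                        | [z [j [j_in /andP[m_ge' _] ->]]]] r_le.
  - by rewrite eqxx.
  - have lt_ii' : i < i' by rewrite ltnNge; apply/negP => le_i'i;
      have := @lam_prev_antimono K D (2 * i').+2 (2 * i).+2; lia.
    have := @lam_prev_antimono K D (2 * i).+3 (2 * i').+1; have := even_row_ge m i'.
    have := lam_prev_leD K D (2 * i).+2 => s_le row_ge s_ge.
    by exfalso; lia.
  - have := odd_row_bounds m j_in; case: (ltngtP z i) => [lt_zi | lt_iz | eq_zi] row_bds.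
    + by apply/orP; right; apply/orP; left; apply/mem_nu_baseP; exists z, j.
    + have := @lam_prev_antimono K D (2 * i).+3 (2 * z).+1; have := lam_prev_leD K D (2 * z).
      by move=> p_le s_ge; exfalso; lia.
    subst z; move: r_le; rewrite /r0 /odd_row leq_add2l leq_pmul2r; last first.
      by apply: lam_prev_gt0; lia.
    rewrite leq_eqVlt ltnS => /orP[/eqP -> | le_jcc]; first by rewrite eqxx !orbT.
    apply/orP; right; apply/orP; right; apply/orP; left.
    by apply/mapP; exists j; rewrite ?mem_iota; lia.
case/or4P => [/eqP -> | /mem_nu_baseP[z [j [lt_zi j_in ->]]]
             | /mapP[j /j_le[j_in lt_r0] ->] | /eqP ->].
- by rewrite AIR_diag //; lia.
- have := odd_row_bounds m j_in; have := @lam_prev_antimono K D (2 * z).+2 (2 * i).+2.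
  have := @lam_prev_antimono K D (2 * z).+3 (2 * i).+1 => lp_le lp_le' row_bds.
  by rewrite AIR_odd_row ?andbT //; lia.
- by rewrite ltnW // AIR_odd_row //; lia.
- by rewrite leqnn AIR_odd_row //; lia.
Qed.

Section EsetColumn.
Variables i k : nat.
Local Notation p := (lp (2 * i).+1).
Local Notation q := (lp (2 * i).+2).
Local Notation s := (lp (2 * i).+3).
(* the row [k + d_down(k)], see [ddown_Eset] *)
Local Notation r0 := (k + D + q).
Hypotheses (p_gt0 : 0 < p) (q_gt0 : 0 < q) (k_lev : at_level k i)
           (k_ge : K - D - p - q <= k).

Lemma Eset_window : p + q <= K - D.
Proof.
have /andP[k_ge' k_lt] := k_lev; have := lam_prev_divn_eq p_gt0; have := lam_prev_even_le K D i.
by case: (beta K D (2 * i)) => [|b]; rewrite ?(mulSn b); lia.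
Qed.

Lemma even_row_Eset : even_row k i = r0.
Proof. exact: even_row_last_period. Qed.

Lemma ddown_Eset : ddown K D k = D + q.
Proof. by rewrite (ddown_level k_lev p_gt0) even_row_Eset; lia. Qed.

Lemma uniq_rows_upto m cc r : m + (D - p) + cc * q < r ->
  uniq (m :: nu_base K D m i ++ [seq odd_row m i j | j <- iota 1 cc] ++ [:: r]).
Proof.
move=> r_gt.
have j_le j : j \in iota 1 cc -> m + (D - p) + q <= odd_row m i j <= m + (D - p) + cc * q.
  rewrite mem_iota => j_in; have : j * q <= cc * q by apply: leq_mul => //; lia.
  have : q <= j * q by rewrite leq_pmull //; lia.
  by rewrite /odd_row; lia.
rewrite /= !mem_cat cat_uniq nu_base_uniq cat_uniq /= !inE !negb_or !andbT.
rewrite map_inj_uniq ?iota_uniq; last first.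
  by move=> j j' /eqP; rewrite /odd_row eqn_add2l eqn_pmul2r // => /eqP.
have := lam_prev_leD K D (2 * i) => p_leD.
apply/and4P; split=> //.
- apply/and3P; split; last by apply/eqP; lia.
    by apply/negP => /nu_base_bounds; lia.
  by apply/negP => /mapP[j /j_le]; lia.
- apply/hasPn => _ /[!mem_cat] /orP[/mapP[j /j_le j_in ->] | /[!inE] /eqP ->];
    by apply/negP => /nu_base_bounds; lia.
- by apply/negP => /mapP[j /j_le]; lia.
Qed.

Definition Eset_column m cc :=
  [/\ mu K D k = m - k, k < m < K - D, m + cc * q = k + p
    & perm_eq [seq r <- iota 0 r0.+1 | AIR K D r m]
              (m :: nu_base K D m i ++ [seq odd_row m i j | j <- iota 1 cc] ++ [:: r0])].

(* Row [r0] lies in the odd submatrix [2i+1] if [r0 < K - λ_{2i+2}], and in the even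
   submatrix [2i+2] otherwise. *)
Lemma Eset_column_odd : r0 < K - s ->
  let w := k - (K - D - p - q) in Eset_column (K - D - q + w %% q) (w %/ q).
Proof.
move=> r0_lt w; have /andP[_ k_lt] := k_lev; have pq_le := Eset_window.
have p_eq := lam_prev_divn_eq q_gt0; have p_leD := lam_prev_leD K D (2 * i).
have w_def : w = k - (K - D - p - q) by [].
move: (divn_eq w q) (ltn_pmod w q_gt0) => w_eq wr_lt; clearbody w.
move: (w %/ q) (w %% q) w_eq wr_lt => cc wr w_eq wr_lt; set m := K - D - q + wr.
have cc_lt : cc < beta K D (2 * i).+1 by rewrite -(ltn_pmul2r q_gt0); lia.
have r0_eq : r0 = odd_row m i cc.+1 by rewrite /odd_row (mulSn cc) /m; lia.
have m_in : K - D - q <= m < K - D by rewrite /m; lia.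
have m_eq : m + cc * q = k + p by rewrite /m; lia.
have hit : AIR K D r0 m by rewrite r0_eq; apply: AIR_odd_row.
split=> //; last 2 first.
- by apply/andP; split; lia.
- apply: uniq_perm; first by rewrite filter_uniq ?iota_uniq.
    by apply: uniq_rows_upto; lia.
  move=> r; rewrite mem_filter mem_iota add0n ltnS andbC r0_eq.
  exact: rows_upto_odd_row.
rewrite (@mu_first_hit _ i m) ?even_row_Eset //; first lia.
move=> c c_in; apply/negP; rewrite -even_row_Eset => hit_c; have lt_kc : k < c by case/andP: c_in.
have := @even_row_ge c i.+1; rewrite mulnSr addn2.
case: (AIR_even_row_right k_lev p_gt0 hit_c lt_kc); rewrite ?even_row_Eset; try lia.
case=> c_ge [j _ r0_eq'] _; have c_in' : K - D - q <= c < K - D by lia.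
by have := odd_row_inj c_in' m_in (etrans (esym r0_eq') r0_eq); lia.
Qed.

Lemma Eset_column_even : K - s <= r0 -> Eset_column (k + s) (beta K D (2 * i).+1).
Proof.
move=> r0_ge; have /andP[_ k_lt] := k_lev; have pq_le := Eset_window.
have p_eq := lam_prev_divn_eq q_gt0; have p_leD := lam_prev_leD K D (2 * i).
have s_gt0 : 0 < s by lia.
have s_lt := lam_prev_ltS q_gt0; have s_le := @lam_prev_antimono K D (2 * i).+1 (2 * i).+3.
have q_eq := lam_prev_divn_eq s_gt0; have t_lt := lam_prev_ltS s_gt0.
have q_ge : s + lp (2 * i).+4 <= q.
  by case: (beta K D (2 * i).+2) q_eq => [|b]; rewrite ?(mulSn b); lia.
set m := k + s; have m_lev : at_level m i.+1 by rewrite at_levelS; apply/andP; split; lia.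
have even_m : even_row m i.+1 = r0.
  by rewrite /even_row mulnSr addn2 modn_small; lia.
have s_gt0' : 0 < lp (2 * i.+1).+1 by rewrite mulnSr addn2.
have m_in : k < m < K - D by apply/andP; split; rewrite /m; lia.
have hit : AIR K D (even_row k i) m by rewrite even_row_Eset -even_m AIR_even_row.
split=> //.
- apply: (mu_first_hit k_lev p_gt0 m_in hit) => c c_in; apply/negP => hit_c.
  have lt_kc : k < c by case/andP: c_in.
  case: (AIR_even_row_right k_lev p_gt0 hit_c lt_kc); rewrite ?even_row_Eset; try lia.
    by case=> _ [j /(odd_row_bounds c) + r0_eq]; rewrite -r0_eq; lia.
  case=> c_lev; rewrite -even_m /even_row mulnSr addn2 => /addnI mod_eq.
  have := @modn_eq_gap (K - D - q) c m s s_gt0; rewrite mod_eq.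
  by move: c_lev; rewrite at_levelS; lia.
- by rewrite /m; lia.
apply: uniq_perm; first by rewrite filter_uniq ?iota_uniq.
  by apply: uniq_rows_upto; rewrite /m; lia.
move=> r; rewrite mem_filter mem_iota add0n ltnS andbC -mem_colsupp.
rewrite (mem_colsupp_level _ m_lev) nu_baseS s_gt0' even_m in_cons !mem_cat inE /= -!orbA.
rewrite andb_idl // => /or4P[/eqP -> | /nu_base_bounds | /mapP[j] | /eqP ->] //; try lia.
by rewrite mem_iota => /(odd_row_bounds m) + ->; lia.
Qed.

Lemma Eset_column_exists : exists m, Eset_column m ((k - (K - D - p - q)) %/ q).
Proof.
case: (ltnP r0 (K - s)) => [r0_lt | r0_ge]; first by eexists; apply: Eset_column_odd.
exists (k + s); suff -> : (k - (K - D - p - q)) %/ q = beta K D (2 * i).+1.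
  exact: Eset_column_even.
have /andP[_ k_lt] := k_lev; have := Eset_window; have := lam_prev_divn_eq q_gt0.
have := lam_prev_ltS q_gt0 => s_lt p_eq pq_le.
rewrite (_ : k - _ = beta K D (2 * i).+1 * q + (r0 - (K - s))); last lia.
by rewrite divnMDl // divn_small ?addn0; lia.
Qed.

Definition rows_below m := [seq r <- iota r0.+1 (K - r0.+1) | AIR K D r m].

Lemma colsupp_split m : colsupp m = [seq r <- iota 0 r0.+1 | AIR K D r m] ++ rows_below m.
Proof.
have /andP[_ k_lt] := k_lev.
by rewrite /colsupp -filter_cat -iotaD subnKC //; lia.
Qed.

Lemma tlist_rows_below m : mu K D k = m - k -> k < m ->
  tlist K D k = [seq r - r0 | r <- rows_below m].
Proof. by move=> mu_eq lt_km; rewrite /tlist ddown_Eset mu_eq subnKC 1?addnA //; apply: ltnW. Qed.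

Lemma cw_right_column x r : r0 < r < K ->
  cw K D x (k + (r - r0)) = sumx K x (k + (r - r0) :: nu_base K D (k + (r - r0)) i) (+) x (r %% K).
Proof.
move=> r_in; have /andP[k_ge' k_lt] := k_lev.
have c_lev : at_level (k + (r - r0)) i by rewrite /at_level; apply/andP; split; lia.
rewrite (cw_level x c_lev) /even_rows p_gt0 (even_row_last_period p_gt0 c_lev); last lia.
rewrite !sumx_cons sumx_nil (_ : k + (r - r0) + D + q = r); last lia.
by rewrite addbF (@modn_small (k + _)) //; lia.
Qed.

Lemma sum_right_columns x m :
  \big[addb/false]_(t <- [seq r - r0 | r <- rows_below m]) cw K D x (k + t)
  = \big[addb/false]_(t <- [seq r - r0 | r <- rows_below m])
       sumx K x (k + t :: nu_base K D (k + t) i) (+) sumx K x (rows_below m).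
Proof.
rewrite !big_map /sumx -big_split /=; apply: eq_big_seq => r.
by rewrite mem_filter mem_iota => /andP[_ r_in]; rewrite cw_right_column //; lia.
Qed.

Lemma decode_Eset_column x m cc : Eset_column m cc ->
  x k = cw K D x k (+) cw K D x m
        (+) \big[addb/false]_(t <- tlist K D k) cw K D x (k + t)
        (+) sumx K x (nu_base K D k i)
        (+) sumx K x (m :: nu_base K D m i ++ [seq odd_row m i j | j <- iota 1 cc])
        (+) \big[addb/false]_(t <- tlist K D k) sumx K x (k + t :: nu_base K D (k + t) i)
  /\ all (sideinfo K D k)
        (nu_base K D k i ++ (m :: nu_base K D m i ++ [seq odd_row m i j | j <- iota 1 cc])
         ++ flatten [seq k + t :: nu_base K D (k + t) i | t <- tlist K D k]).
Proof.
case=> mu_eq /andP[lt_km m_lt] m_eq low_perm; have /andP[_ k_lt] := k_lev.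
have p_leD := lam_prev_leD K D (2 * i).
rewrite (tlist_rows_below mu_eq lt_km); split.
  rewrite sum_right_columns (cw_level x k_lev) /even_rows p_gt0 even_row_Eset.
  rewrite cw_colsupp (colsupp_split m) sumx_cat (perm_sumx _ low_perm).
  rewrite !sumx_cons !sumx_cat !sumx_cons sumx_nil.
  move: (x k) (x (r0 %% K)) (x (m %% K)) (sumx K x (nu_base K D k i)) (sumx K x (nu_base K D m i)).
  move: (sumx K x [seq odd_row m i j | j <- iota 1 cc]) (sumx K x (rows_below m)).
  by move: (\big[addb/false]_(t <- _) _); do 8!case.
have ext_side : all (sideinfo K D k) [seq odd_row m i j | j <- iota 1 cc].
  apply/allP => r /mapP[j]; rewrite mem_iota => j_in ->; apply: sideinfo_ahead.
  have : j * q <= cc * q by apply: leq_mul => //; lia.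
  have : q <= j * q by rewrite leq_pmull //; lia.
  by rewrite /odd_row; lia.
have right_side : all (sideinfo K D k)
    (flatten [seq k + t :: nu_base K D (k + t) i | t <- [seq r - r0 | r <- rows_below m]]).
  apply/allP => r /flattenP[rs /mapP[t /mapP[r' r'_in ->] ->]].
  move: r'_in; rewrite mem_filter mem_iota => /andP[_ r'_in].
  by rewrite in_cons => /orP[/eqP -> | /nu_base_bounds r_in]; apply: sideinfo_ahead; lia.
rewrite !all_cat /= all_cat ext_side right_side !all_sideinfo_nu_base ?sideinfo_ahead //; lia.
Qed.

End EsetColumn.

Lemma decode_Eset x i k : i < uphalf (ell K D) -> Eset K D i k ->
  let m := k + mu K D k in
  let ts := tlist K D k in
  let nuk := nu_base K D k i in
  let num := m :: nu_base K D m i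
               ++ [seq m + (D - lam K D (2 * i)) + j * lam K D (2 * i).+1
                  | j <- iota 1 (cE K D i k)] in
  let nut := fun t => (k + t) :: nu_base K D (k + t) i in
  x k = cw K D x k (+) cw K D x m (+) \big[addb/false]_(t <- ts) cw K D x (k + t)
        (+) sumx K x nuk (+) sumx K x num
        (+) \big[addb/false]_(t <- ts) sumx K x (nut t)
  /\ all (sideinfo K D k) (nuk ++ num ++ flatten [seq nut t | t <- ts]).
Proof.
move=> lt_i kE; have [p_gt0 q_gt0 k_lev k_ge ->] := Eset_spec lt_i kE.
have [m col] := Eset_column_exists p_gt0 q_gt0 k_lev k_ge.
have [mu_eq /andP[lt_km _] _ _] := col.
by rewrite mu_eq subnKC ?(ltnW lt_km) //; apply: decode_Eset_column col.
Qed.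

Definition bottom_column k c :=
  AIR K D k c /\ forall j, AIR K D j c -> j <= k -> j = k %[mod K - D].

Lemma bottom_column_wide k : D <= K - D -> K - D <= k < K ->
  bottom_column k (k %% (K - D)).
Proof.
move=> le_Dn /andP[k_ge k_lt].
have k'_eq : k %% (K - D) = k - (K - D).
  by rewrite -{1}(subnKC k_ge) modnDl modn_small; lia.
have lp2 : lp 2 = (K - D) %% D by rewrite lam_prevSS lam_prev1 lam_prev0 (gtn_eqF D_gt0).
have lp2_le : D <= K - D - lp 2.
  by rewrite lp2 {1}(divn_eq (K - D) D) addnK leq_pmull // divn_gt0.
have k'_lev : at_level (k - (K - D)) 0 by rewrite /at_level muln0 lam_prev0 subnn; lia.
have even_k : even_row (k - (K - D)) 0 = k.
  by rewrite /even_row muln0 lam_prev0 lam_prev1 subnn subn0 modn_small; lia.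
rewrite k'_eq; split; first by rewrite -{1}even_k AIR_even_row // muln0 lam_prev1.
move=> j; rewrite -mem_colsupp (mem_colsupp_level _ k'_lev).
by case/or3P=> [/eqP -> | // | /andP[_ /eqP ->]]; rewrite ?even_k // -k'_eq modn_mod.
Qed.

Lemma lam_prev2_narrow : K - D < D -> lp 2 = K - D.
Proof. by move=> lt_nD; rewrite lam_prevSS lam_prev1 lam_prev0 (gtn_eqF D_gt0) modn_small. Qed.

Lemma odd_row_narrow c j : K - D < D -> odd_row c 0 j = c + j * (K - D).
Proof. by move=> lt_nD; rewrite /odd_row muln0 lam_prev1 subnn addn0 lam_prev2_narrow. Qed.

Lemma bottom_column_even k : K - D < D -> K - lp 3 <= k < K ->
  bottom_column k (k %% (K - D)).
Proof.
move=> lt_nD /andP[k_ge k_lt]; have lp2 := lam_prev2_narrow lt_nD.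
have lp2_gt0 : 0 < lp 2 by lia.
have D_eq := lam_prev_divn_eq lp2_gt0; rewrite lam_prev1 lp2 in D_eq.
have s_gt0 : 0 < lp 3 by lia.
have s_lt := lam_prev_ltS lp2_gt0; have n_eq := lam_prev_divn_eq s_gt0.
have t_lt := lam_prev_ltS s_gt0; rewrite lp2 in s_lt n_eq.
have n_ge : lp 3 + lp 4 <= K - D by case: (beta K D 2) n_eq => [|b]; rewrite ?(mulSn b); lia.
have k_eq : k = (beta K D 1).+1 * (K - D) + (k - (K - lp 3)) by rewrite mulSn; lia.
have k'_eq : k %% (K - D) = k - (K - lp 3) by rewrite {1}k_eq modnMDl modn_small; lia.
have k'_lev : at_level (k - (K - lp 3)) 1 by rewrite /at_level muln1 lp2; lia.
have even_k : even_row (k - (K - lp 3)) 1 = k by rewrite /even_row muln1 lp2 modn_small; lia.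
rewrite k'_eq; split; first by rewrite -{1}even_k AIR_even_row // muln1.
move=> j; rewrite -mem_colsupp (mem_colsupp_level _ k'_lev).
case/or3P=> [/eqP -> | /mem_nu_baseP[z [jj [lt_z1 _ ->]]] | /andP[_ /eqP ->]]; rewrite ?even_k //.
  by rewrite -k'_eq modn_mod.
move: lt_z1; rewrite ltnS leqn0 => /eqP ->.
by rewrite odd_row_narrow // addnC modnMDl -k'_eq modn_mod.
Qed.

Lemma bottom_column_odd k : K - D < D -> K - D <= k < K - lp 3 ->
  bottom_column k (k %% (K - D)).
Proof.
move=> lt_nD /andP[k_ge k_lt]; have lp2 := lam_prev2_narrow lt_nD.
have lp2_gt0 : 0 < lp 2 by lia.
have D_eq := lam_prev_divn_eq lp2_gt0; rewrite lam_prev1 lp2 in D_eq.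
have n_gt0 : 0 < K - D by lia.
have k_eq := divn_eq k (K - D); have k'_lt := ltn_pmod k n_gt0.
have a_in : 0 < k %/ (K - D) <= beta K D 1.
  by rewrite divn_gt0 // k_ge -ltnS ltn_divLR // mulSn; lia.
have k_row : odd_row (k %% (K - D)) 0 (k %/ (K - D)) = k by rewrite odd_row_narrow // addnC -k_eq.
split; first by rewrite -{1}k_row AIR_odd_row // muln0 lp2 subnn k'_lt.
move=> j /AIR_cases [[-> _] | [i' [k'_lev p_gt0 ->]] | [z [jj [jj_in /andP[k'_ge _] ->]]]].
- by rewrite modn_mod.
- case: i' k'_lev p_gt0 => [|i'] /andP[_ k'_lt']; first by rewrite muln0 lp2 subnn in k'_lt'.
  have := @lam_prev_antimono K D 3 (2 * i'.+1).+1; have := even_row_ge (k %% (K - D)) i'.+1.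
  by lia.
case: z jj_in k'_ge => [|z] jj_in k'_ge; first by rewrite odd_row_narrow // addnC modnMDl modn_mod.
have := odd_row_bounds (k %% (K - D)) jj_in; have := lam_prev_leD K D (2 * z.+1).
by have := @lam_prev_antimono K D 3 (2 * z.+1).+1; lia.
Qed.

Lemma bottom_column_mod k : K - D <= k < K -> bottom_column k (k %% (K - D)).
Proof.
move=> k_in; case: (leqP D (K - D)) => [le_Dn | lt_nD]; first exact: bottom_column_wide.
have /andP[k_ge k_lt] := k_in.
by case: (ltnP k (K - lp 3)) => k_s;
  [apply: bottom_column_odd | apply: bottom_column_even]; rewrite // k_s ?k_ge ?k_lt.
Qed.

Lemma sideinfo_wrap k j : K - D <= k < K -> j + (K - D) <= k -> sideinfo K D k j.
Proof.
move=> k_in j_le; apply/hasP; exists (j + K - k); first by rewrite mem_iota; lia.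
by rewrite subnKC -?addnBA ?modnDr //; lia.
Qed.

Lemma decode_bottom x k : K - D <= k < K ->
  let k' := k %% (K - D) in
  let nuk' := [seq j <- iota 0 K | AIR K D j k' && (j != k)] in
  AIR K D k k' /\ x k = cw K D x k' (+) sumx K x nuk' /\ all (sideinfo K D k) nuk'.
Proof.
move=> k_in k' nuk'; have [hit rows_congr] := bottom_column_mod k_in.
have nuk'_eq : nuk' = rem k (colsupp k').
  rewrite rem_filter ?filter_uniq ?iota_uniq // -filter_predI.
  by apply: eq_filter => j /=; rewrite andbC.
split=> //; split.
  rewrite nuk'_eq cw_colsupp (perm_sumx _ (perm_to_rem (_ : k \in colsupp k'))) ?mem_colsupp //.
  by rewrite sumx_cons addbK modn_small //; case/andP: k_in.
apply/allP => j; rewrite mem_filter mem_iota => /and3P[/andP[hit_j neq_jk] _ j_lt].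
case: (leqP j k) => [le_jk | lt_kj]; last by apply: sideinfo_ahead; lia.
apply: sideinfo_wrap => //; apply: (@modn_eq_gap 0 j k); first by lia.
  by rewrite leq0n ltn_neqAle neq_jk.
by rewrite !subn0; apply: rows_congr.
Qed.

End AIRMatrix.

Theorem theorem2 (K D : nat) (x : nat -> bool) :
  1 <= D -> D <= K - 1 ->
  (* (i) *)
  (forall i k, i <= uphalf (ell K D) -> Dset K D i k ->
     let m := k + mu K D k in
     let nuk := nu_base K D k i in
     let num := m :: nu_base K D m i in
     x k = cw K D x k (+) cw K D x m (+) sumx K x nuk (+) sumx K x num
     /\ all (sideinfo K D k) (nuk ++ num))
  /\
  (* (ii) *)
  (forall i k, i < uphalf (ell K D) -> Eset K D i k ->
     let m := k + mu K D k in
     let ts := tlist K D k in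
     let nuk := nu_base K D k i in
     let num := m :: nu_base K D m i
                  ++ [seq m + (D - lam K D (2 * i)) + j * lam K D (2 * i).+1
                     | j <- iota 1 (cE K D i k)] in
     let nut := fun t => (k + t) :: nu_base K D (k + t) i in
     x k = cw K D x k (+) cw K D x m (+) \big[addb/false]_(t <- ts) cw K D x (k + t)
           (+) sumx K x nuk (+) sumx K x num
           (+) \big[addb/false]_(t <- ts) sumx K x (nut t)
     /\ all (sideinfo K D k) (nuk ++ num ++ flatten [seq nut t | t <- ts]))
  /\
  (* (iii) *)
  (forall k, K - D - lam K D (ell K D) <= k < K - D ->
     let nuk := (if odd (ell K D) then [::] else [:: k + D])
                  ++ nu_base K D k (uphalf (ell K D)) in
     x k = cw K D x k (+) sumx K x nuk
     /\ all (sideinfo K D k) nuk)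
  /\
  (* (iv) *)
  (forall k, K - D <= k < K ->
     let k' := k %% (K - D) in
     let nuk' := [seq j <- iota 0 K | AIR K D j k' && (j != k)] in
     AIR K D k k'
     /\ x k = cw K D x k' (+) sumx K x nuk'
     /\ all (sideinfo K D k) nuk').
Proof.
move=> D_gt0 D_le; have D_lt_K : D < K by lia.
split; first by move=> i k _; apply: decode_Dset.
split; first by move=> i k; apply: decode_Eset.
by split=> k; [apply: decode_last_columns | apply: decode_bottom].
Qed.
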